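(* If there is a fork in governance, then the auditor can assign blame to at least $f+1$ misbehaving replicas.
   Context: System model. A service runs on a set of replicas (its configuration), $N$ replicas per configuration with $f=\lceil N/3\rceil-1$, executing the L-PBFT protocol (PBFT-style, with a ledger); each batch at sequence number $s$ is prepared by $N-f$ replicas of the current configuration signing pre-prepare/prepare messages, and pipelining depth is $P$. Governance transactions change the configuration (members and replicas): a referendum is passed by a final vote transaction; the primary ends its batch after each governance transaction, and after the final vote committed at sequence number $s$, it issues $2P$ empty ''end-of-configuration'' batches; the $P$-th end-of-configuration batch (at $s+P$) contains evidence that the batch at $s$ committed and, in its pre-prepare, the committed Merkle root (the root of the ledger's Merkle tree at $s$). A correct replica prepares the $P$-th end-of-configuration batch at $s+P$ only after the final vote transaction triggering the configuration change has committed at $s$ (hence all preceding governance transactions have committed). The governance sub-ledger consists of the governance transactions with their evidence and, for each configuration change, the $P$-th and $2P$-th end-of-configuration batches. The configuration number of a configuration is its distance from the genesis configuration (number $0$). Two $P$-th end-of-configuration batches are equivalent if they are at the same ledger index and sequence number and are preceded by the same valid governance sub-ledger (their pre-prepares contain the same committed Merkle root). There is a fork in governance if there exist two $P$-th end-of-configuration batches for the same configuration number, each belonging to a valid governance sub-ledger, that are not equivalent. The auditor assigns blame to a replica by exhibiting statements signed by that replica that a correct replica would never sign. *)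

From HB Require Import structures.
From mathcomp Require Import all_boot.
Set Implicit Arguments. Unset Strict Implicit. Unset Printing Implicit Defensive.

Section Governance.
(* R : replica identities; G : governance transactions (with their evidence);
   D : Merkle roots (digests). *)
Variables (R : finType) (G : Type) (D : eqType).

(* f = ceil(N/3) - 1   (ceil(N/3) = (N+2) %/ 3) *)
Definition fault_bound (N : nat) : nat := ((N + 2) %/ 3).-1.

(* A signed protocol message: a prepare (or pre-prepare) for the P-th
   end-of-configuration batch of configuration number k, at ledger index i,
   sequence number s, whose pre-prepare carries committed Merkle root d.
   Encoded as the tuple (k, i, s, d). *)
Definition msg := (nat * nat * nat * D)%type.
Definition msg_config (m : msg) : nat := m.1.1.1.

Definition signed := (R * msg)%type.

(* The P-th end-of-configuration batch (relevant header). *)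
Record eoc_batch := EoC { eoc_idx : nat; eoc_seq : nat; eoc_root : D }.

(* One configuration change as recorded in the governance sub-ledger. *)
Record step := Step {
  st_gov : seq G;            (* governance txs (ending with the final vote) *)
  st_eocP : eoc_batch;
  st_sigs : seq signed;      (* signed (pre-)prepares for the P-th EoC batch *)
  st_eoc2P : nat * nat       (* 2P-th end-of-configuration batch (index, seqno) *)
}.

Definition prepare_of (k : nat) (b : eoc_batch) : msg :=
  (k, eoc_idx b, eoc_seq b, eoc_root b).

(* Configuration number k of a governance sub-ledger L, starting from the
   genesis configuration C0; nc C txs is the configuration obtained from C
   by the governance transactions txs. *)
Definition config_at (C0 : {set R}) (nc : {set R} -> seq G -> {set R})
  (L : seq step) (k : nat) : {set R} :=
  foldl (fun C st => nc C (st_gov st)) C0 (take k L).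

(* Validity of a governance sub-ledger: for each configuration number k,
   configuration k has N replicas, the P-th EoC batch carries the committed
   Merkle root of everything preceding it (the earlier configuration changes
   and the governance transactions of change k), and it was prepared by at
   least N - f replicas of configuration k. *)
Definition valid_subledger (N : nat) (C0 : {set R})
  (nc : {set R} -> seq G -> {set R}) (mroot : seq step -> seq G -> D)
  (L : seq step) : Prop :=
  forall k st, onth L k = Some st ->
    [/\ #|config_at C0 nc L k| = N,
        eoc_root (st_eocP st) = mroot (take k L) (st_gov st) &
        N - fault_bound N <=
          #|[set r in config_at C0 nc L k | (r, prepare_of k (st_eocP st)) \in st_sigs st]| ].

Definition equivalent (b1 b2 : eoc_batch) : Prop :=
  [/\ eoc_idx b1 = eoc_idx b2, eoc_seq b1 = eoc_seq b2 & eoc_root b1 = eoc_root b2].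

Definition gov_fork N C0 nc mroot (L1 L2 : seq step) : Prop :=
  [/\ valid_subledger N C0 nc mroot L1, valid_subledger N C0 nc mroot L2 &
      exists k st1 st2, [/\ onth L1 k = Some st1, onth L2 k = Some st2 &
                            ~ equivalent (st_eocP st1) (st_eocP st2)] ].

(* Statements a correct replica never signs: prepares for two non-equivalent
   P-th end-of-configuration batches of the same configuration number. *)
Definition conflicting (m1 m2 : msg) : Prop :=
  msg_config m1 = msg_config m2 /\ m1 <> m2.

(* Blame: the auditor exhibits, from the evidence ev, two statements signed
   by r that a correct replica would never sign. *)
Definition blamed (ev : seq signed) (r : R) : Prop :=
  exists m1 m2, [/\ (r, m1) \in ev, (r, m2) \in ev & conflicting m1 m2].

Definition evidence (L : seq step) : seq signed := flatten (map st_sigs L).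

End Governance.

(* Go to the smallest configuration number j at which the two sub-ledgers
   carry non-equivalent P-th end-of-configuration batches.  Below j the
   batches agree, and a committed Merkle root binds the whole governance
   history preceding it, so both sub-ledgers compute the same configuration
   j.  In that configuration of N replicas the two batches were each prepared
   by at least N - f replicas; the two quorums share at least N - 2f >= f + 1
   replicas, and each of them signed prepares for two non-equivalent batches
   of configuration j. *)
From HB Require Import structures.
From mathcomp Require Import all_boot.
From mathcomp Require Import zify.
Set Implicit Arguments. Unset Strict Implicit. Unset Printing Implicit Defensive.

Lemma onth_predS (T : Type) (s : seq T) k x :
  onth s k.+1 = Some x -> exists y, onth s k = Some y.
Proof. by elim: s k => [|y s IH] [|k] //=; [exists y | exact: IH]. Qed.

Lemma cardsI_quorum (T : finType) (A B C : {set T}) :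
  A \subset C -> B \subset C -> #|A| + #|B| <= #|C| + #|A :&: B|.
Proof.
move=> sAC sBC; rewrite -cardsUI leq_add2r.
by apply: subset_leq_card; rewrite subUset sAC.
Qed.

Lemma fault_bound_lt N : 0 < N -> 3 * fault_bound N < N.
Proof. rewrite /fault_bound; lia. Qed.

Section Blame.
Variables (R : finType) (G : Type) (D : eqType).
Implicit Types (b : eoc_batch D) (L : seq (step R G D)).

Lemma equivalentP b1 b2 :
  reflect (equivalent b1 b2)
    [&& eoc_idx b1 == eoc_idx b2, eoc_seq b1 == eoc_seq b2 & eoc_root b1 == eoc_root b2].
Proof. by apply: (iffP and3P) => [[/eqP ? /eqP ? /eqP ?] | [-> -> ->]]. Qed.

Lemma conflicting_prepares k b1 b2 :
  ~ equivalent b1 b2 -> conflicting (prepare_of k b1) (prepare_of k b2).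
Proof. by move=> neq_b; split=> // -[? ? ?]; apply: neq_b. Qed.

Lemma mem_evidence L k st x :
  onth L k = Some st -> x \in st_sigs st -> x \in evidence L.
Proof.
move=> Lk x_st; apply/flattenP; exists (st_sigs st) => //.
by apply/onthP; exists k; rewrite onth_map Lk.
Qed.

Lemma config_atS C0 (nc : {set R} -> seq G -> {set R}) L k st :
  onth L k = Some st ->
  config_at C0 nc L k.+1 = nc (config_at C0 nc L k) (st_gov st).
Proof.
move=> Lk; have k_lt : k < size L by rewrite -onthTE Lk.
by rewrite /config_at (take_nth st k_lt) foldl_rcons (onth_nth st _ _ _ Lk).
Qed.

Variables (N : nat) (C0 : {set R}) (nc : {set R} -> seq G -> {set R})
  (mroot : seq (step R G D) -> seq G -> D) (L1 L2 : seq (step R G D)).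
Hypothesis mroot_inj :
  forall p1 g1 p2 g2, mroot p1 g1 = mroot p2 g2 -> p1 = p2 /\ g1 = g2.
Hypotheses (valid1 : valid_subledger N C0 nc mroot L1)
           (valid2 : valid_subledger N C0 nc mroot L2).

Lemma equivalent_config_atS k st1 st2 :
  onth L1 k = Some st1 -> onth L2 k = Some st2 ->
  equivalent (st_eocP st1) (st_eocP st2) ->
  config_at C0 nc L1 k.+1 = config_at C0 nc L2 k.+1.
Proof.
move=> L1k L2k [_ _ eq_root].
have [_ root1 _] := valid1 L1k; have [_ root2 _] := valid2 L2k.
have [eq_prefix eq_gov] : take k L1 = take k L2 /\ st_gov st1 = st_gov st2.
  by apply: mroot_inj; rewrite -root1 -root2.
by rewrite (config_atS _ _ L1k) (config_atS _ _ L2k) /config_at eq_prefix eq_gov.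
Qed.

Lemma first_fork k st1 st2 :
  onth L1 k = Some st1 -> onth L2 k = Some st2 ->
  ~ equivalent (st_eocP st1) (st_eocP st2) ->
  exists j st1' st2',
    [/\ onth L1 j = Some st1', onth L2 j = Some st2',
        ~ equivalent (st_eocP st1') (st_eocP st2') &
        config_at C0 nc L1 j = config_at C0 nc L2 j].
Proof.
elim: k st1 st2 => [|k IH] st1 st2 L1k L2k neq_b.
  by exists 0, st1, st2; rewrite /config_at !take0.
have [[a L1a] [b L2b]] := (onth_predS L1k, onth_predS L2k).
case: (equivalentP (st_eocP a) (st_eocP b)) => [eq_ab | neq_ab].
  by exists k.+1, st1, st2; split=> //; apply: equivalent_config_atS L1a L2b eq_ab.
exact: IH L1a L2b neq_ab.
Qed.

Lemma fork_blamed_quorum j st1 st2 :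
  0 < N -> onth L1 j = Some st1 -> onth L2 j = Some st2 ->
  ~ equivalent (st_eocP st1) (st_eocP st2) ->
  config_at C0 nc L1 j = config_at C0 nc L2 j ->
  exists B : {set R},
    fault_bound N + 1 <= #|B| /\
    forall r, r \in B -> blamed (evidence L1 ++ evidence L2) r.
Proof.
move=> N_gt0 L1j L2j neq_b eq_config.
set C := config_at C0 nc L2 j.
set Q1 := [set r in C | (r, prepare_of j (st_eocP st1)) \in st_sigs st1].
set Q2 := [set r in C | (r, prepare_of j (st_eocP st2)) \in st_sigs st2].
have [card_C _ quorum1] := valid1 L1j; have [_ _ quorum2] := valid2 L2j.
rewrite eq_config -/C -/Q1 in card_C quorum1; rewrite -/C -/Q2 in quorum2.
have overlap : #|Q1| + #|Q2| <= #|C| + #|Q1 :&: Q2|.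
  by apply: cardsI_quorum; rewrite ?/Q1 ?/Q2 setIdE subsetIl.
exists (Q1 :&: Q2); split.
  by have := fault_bound_lt N_gt0; lia.
move=> r; rewrite !inE => /andP[/andP[_ signed1] /andP[_ signed2]].
exists (prepare_of j (st_eocP st1)), (prepare_of j (st_eocP st2)); split.
- by rewrite mem_cat (mem_evidence L1j signed1).
- by rewrite mem_cat (mem_evidence L2j signed2) orbT.
- exact: conflicting_prepares.
Qed.

End Blame.

Theorem lemma7 (R : finType) (G : Type) (D : eqType) (N : nat)
  (C0 : {set R}) (nc : {set R} -> seq G -> {set R})
  (mroot : seq (step R G D) -> seq G -> D) (L1 L2 : seq (step R G D)) :
  0 < N ->
  (* Merkle roots are binding (idealized collision resistance) *)
  (forall p1 g1 p2 g2, mroot p1 g1 = mroot p2 g2 -> p1 = p2 /\ g1 = g2) ->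
  gov_fork N C0 nc mroot L1 L2 ->
  exists B : {set R},
    fault_bound N + 1 <= #|B| /\
    forall r, r \in B -> blamed (evidence L1 ++ evidence L2) r.
Proof.
move=> N_gt0 mroot_inj [valid1 valid2 [k [st1 [st2 [L1k L2k neq_b]]]]].
have [j [st1' [st2' [L1j L2j neq_j eq_config]]]] :=
  first_fork mroot_inj valid1 valid2 L1k L2k neq_b.
exact: (fork_blamed_quorum valid1 valid2 N_gt0 L1j L2j neq_j eq_config).
Qed.
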